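(* Let $\hat\mu_n=F(\hat m_n^1,\dots,\hat m_n^{l_1},m_n^{l_1+1},\dots,m_n^{l_1+l_2})$ be a moment-type estimator as in the context (conditions (i)–(iii)), and suppose in addition that $F$ is uniformly locally linearly approximable: there exist $N$, $C>0$, $\epsilon>0$ and, for each $n$, a matrix $dF_{m_n}\in\mathbb{R}^{k\times l_1}$ such that for all $n\ge N$ and all $\tilde m_{r}=(\tilde m^1,\dots,\tilde m^{l_1})'$ with $\|\tilde m_r-m_{n,r}\|_2^2<\epsilon$, $$\|F(\tilde m^1,\dots,\tilde m^{l_1},m_n^{l_1+1},\dots,m_n^{l_1+l_2})-F(m_n)-dF_{m_n}(\tilde m_r-m_{n,r})\|_2\le C\|\tilde m_r-m_{n,r}\|_2^2,$$ where $m_n=(m_n^1,\dots,m_n^{l_1+l_2})$ and $m_{n,r}=(m_n^1,\dots,m_n^{l_1})'$. Define the linearization $\hat\mu_n^L=F(m_n)+dF_{m_n}(\hat m_{n,r}-m_{n,r})$ with $\hat m_{n,r}=(\hat m_n^1,\dots,\hat m_n^{l_1})'$. If $|||\mathbf{D}|||_2/n\to0$, then $$\hat\mu_n-\hat\mu_n^L=o_p\Big(\sqrt{|||\mathbf{D}|||_2/n}\Big)=o_p(1),$$ and $$\mathrm{Var}(\hat\mu_n^L)=\frac1{n^2}z'\mathbf{D}z,\qquad z=\Big(\sum_{s=1}^{l_1}dF^s_{m_n}1_{kn}'\,\mathrm{diag}(\phi^s)\Big)'\in\mathbb{R}^{kn\times k},$$ where $dF^s_{m_n}\in\mathbb{R}^{k}$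 is the $s$-th column of $dF_{m_n}$. Moreover, if $\frac1n\|z\|_2^2=O(1)$ (Frobenius norm), then every entry of $\mathrm{Var}(\hat\mu_n^L)$ is $O(|||\mathbf{D}|||_2/n)$, and hence $O(1/n)$ if also $|||\mathbf{D}|||_2=O(1)$.
   Context: Setup: there are $k$ treatment arms and $n$ units; $k$ is fixed while $n\to\infty$ along a sequence of finite populations, each with its own randomized design. All probabilities, expectations, variances, $O_p$ and $o_p$ refer only to the randomness of the treatment assignment. $\mathbf{R}_{ai}\in\{0,1\}$ indicates that unit $i$ is assigned to arm $a$ (exactly one arm per unit); $\mathbf{R}$ is the $kn\times kn$ diagonal matrix with diagonal $(\mathbf{R}_{11},\dots,\mathbf{R}_{1n},\mathbf{R}_{21},\dots,\mathbf{R}_{kn})$; $\pi=\mathrm{E}[\mathbf{R}]$ with diagonal entries in $(0,1)$; $1_{kn}$ is the all-ones vector; $\mathbf{D}=\mathrm{Var}(\pi^{-1}\mathbf{R}1_{kn})$; $|||\cdot|||_2$ is the spectral norm; $\mathrm{diag}(v)$ is the diagonal matrix with diagonal $v$. Moment-type estimator: fixed integers $l_1\ge1,l_2\ge0$; for each $n$, nonrandom $\phi^1,\dots,\phi^{l_1+l_2}\in\mathbb{R}^{kn}$ and a map $F=F_n:\mathbb{R}^{l_1+l_2}\to\mathbb{R}^k$ with (i) $\hat\mu_n=F(\hat m_n^1,\dots,\hat m_n^{l_1},m_n^{l_1+1},\dots,m_n^{l_1+l_2})$, $\hat m_n^s=\frac1n1_{kn}'\pi^{-1}\mathbf{R}\phi^s$,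 $m_n^s=\frac1n1_{kn}'\phi^s$; (ii) there exist $N,C,\epsilon>0$ such that for $n\ge N$ and $\sum_{s\le l_1}(\tilde m^s-m_n^s)^2<\epsilon$, $\|F(\tilde m^1,\dots,\tilde m^{l_1},m_n^{l_1+1},\dots)-F(m_n)\|_2\le C\sqrt{\sum_{s\le l_1}(\tilde m^s-m_n^s)^2}$; (iii) $\frac1n\|\phi^s\|_2^2\le C'$ for all $s,n$. *)

From HB Require Import structures.
From mathcomp Require Import all_boot all_order all_algebra.
From mathcomp Require Import all_classical all_reals all_analysis.
Set Implicit Arguments. Unset Strict Implicit. Unset Printing Implicit Defensive.
Import Order.TTheory GRing.Theory Num.Theory.
Import numFieldNormedType.Exports.
Local Open Scope ring_scope.
Local Open Scope classical_set_scope.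

(* Units of R^{kn} are indexed by pairs (a, i) : 'I_k * 'I_n  (arm a, unit i).
   An assignment is a map w : 'I_n -> 'I_k (exactly one arm per unit);
   a randomized design for population n is a pmf P on {ffun 'I_n -> 'I_k}. *)

Section Defs.
Variable R : realType.
Variable k : nat.

Definition is_design n (P : {ffun 'I_n -> 'I_k} -> R) :=
  (forall w, 0 <= P w) /\ \sum_w P w = 1.

Definition Ex n (P : {ffun 'I_n -> 'I_k} -> R) (X : {ffun 'I_n -> 'I_k} -> R) :=
  \sum_w P w * X w.
Definition Cov n (P : {ffun 'I_n -> 'I_k} -> R) (X Y : {ffun 'I_n -> 'I_k} -> R) :=
  Ex P (fun w => (X w - Ex P X) * (Y w - Ex P Y)).
Definition Prob n (P : {ffun 'I_n -> 'I_k} -> R) (A : pred {ffun 'I_n -> 'I_k}) :=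
  \sum_(w | A w) P w.

Definition Rind n (w : {ffun 'I_n -> 'I_k}) (t : ('I_k * 'I_n)%type) : R :=
  (w t.2 == t.1)%:R.
Definition pidiag n (P : {ffun 'I_n -> 'I_k} -> R) (t : ('I_k * 'I_n)%type) :=
  Ex P (fun w => Rind w t).
Definition Dmat n (P : {ffun 'I_n -> 'I_k} -> R) (t t' : ('I_k * 'I_n)%type) :=
  Cov P (fun w => Rind w t / pidiag P t) (fun w => Rind w t' / pidiag P t').

Definition norm2 (I : finType) (x : I -> R) := Num.sqrt (\sum_i x i ^+ 2).
Definition specnorm n (M : ('I_k * 'I_n)%type -> ('I_k * 'I_n)%type -> R) :=
  sup [set norm2 (fun t => \sum_t' M t t' * x t') |
        x in [set x : ('I_k * 'I_n)%type -> R | norm2 x <= 1]].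

Definition mhat n (P : {ffun 'I_n -> 'I_k} -> R) (phi : ('I_k * 'I_n)%type -> R)
    (w : {ffun 'I_n -> 'I_k}) :=
  n%:R^-1 * \sum_t Rind w t / pidiag P t * phi t.
Definition mpop n (phi : ('I_k * 'I_n)%type -> R) := n%:R^-1 * \sum_t phi t.

Section Moment.
Variables (l1 l2 n : nat).
Variable phi : 'I_(l1 + l2) -> ('I_k * 'I_n)%type -> R.

Definition mvec : 'I_(l1 + l2) -> R := fun s => mpop (phi s).
Definition mvec_r : 'I_l1 -> R := fun j => mpop (phi (lshift l2 j)).
Definition mix (mt : 'I_l1 -> R) : 'I_(l1 + l2) -> R :=
  fun s => match fintype.split s with inl j => mt j | inr _ => mpop (phi s) end.
Definition dist2r (mt : 'I_l1 -> R) := \sum_j (mt j - mvec_r j) ^+ 2.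
Definition mhat_r (P : {ffun 'I_n -> 'I_k} -> R) (w : {ffun 'I_n -> 'I_k}) : 'I_l1 -> R :=
  fun j => mhat P (phi (lshift l2 j)) w.

Variable F : ('I_(l1 + l2) -> R) -> 'I_k -> R.
Variable dF : 'I_k -> 'I_l1 -> R.

Definition muhat P w : 'I_k -> R := F (mix (mhat_r P w)).
Definition muL P w : 'I_k -> R :=
  fun a => F mvec a + \sum_j dF a j * (mhat_r P w j - mvec_r j).
(* z = (sum_s dF^s 1' diag(phi^s))' : kn x k *)
Definition zmat (t : ('I_k * 'I_n)%type) (c : 'I_k) : R :=
  \sum_j dF c j * phi (lshift l2 j) t.
End Moment.

Definition o_p (P : forall n, {ffun 'I_n -> 'I_k} -> R)
    (X : forall n, {ffun 'I_n -> 'I_k} -> 'I_k -> R) (a : nat -> R) :=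
  forall eps : R, 0 < eps ->
    (fun n => Prob (P n) (fun w => eps * a n < norm2 (X n w))) @ \oo --> 0.

Definition bigO1 (x : nat -> R) := exists C : R, exists N : nat,
  forall n, (N <= n)%N -> `|x n| <= C.
End Defs.

From mathcomp Require Import all_boot all_order all_algebra.
From mathcomp Require Import all_classical all_reals all_analysis.
From mathcomp Require Import ring lra.
Import Order.TTheory GRing.Theory Num.Theory.
Import numFieldNormedType.Exports.
Local Open Scope ring_scope.
Local Open Scope classical_set_scope.

(** The moment estimators [mhat] and the linearization [muL] are affine in the
    inverse-probability weights [R_t / pi_t], so their covariances are quadratic
    forms in [D] scaled by [n^-2], bounded through the spectral norm:
    [Var mhat^s <= C' |||D|||/n] and [Cov muL = n^-2 z' D z].
    The remainder [muhat - muL] is at most [C |mhat_r - m_r|^2] on the event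
    [|mhat_r - m_r|^2 < eps]; by Markov the complement has probability
    [O(|||D|||/n)], and on the event Markov again bounds the probability that the
    remainder exceeds [eta sqrt(|||D|||/n)] by [O(sqrt(|||D|||/n))]. *)

Section FiniteSums.
Context {R : realType} {I : finType}.
Implicit Types x y : I -> R.

Lemma norm2_ge0 x : 0 <= norm2 x.
Proof. exact: sqrtr_ge0. Qed.

Lemma sumr_sqr_ge0 x : 0 <= \sum_i x i ^+ 2.
Proof. by apply: sumr_ge0 => i _; exact: sqr_ge0. Qed.

Lemma sqr_norm2 x : norm2 x ^+ 2 = \sum_i x i ^+ 2.
Proof. by rewrite sqr_sqrtr // sumr_sqr_ge0. Qed.

Lemma norm2_0 : norm2 (fun _ : I => 0 : R) = 0.
Proof. by rewrite /norm2 big1 ?sqrtr0 // => i _; rewrite expr0n. Qed.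

Lemma norm2_eq0 x : norm2 x = 0 -> forall i, x i = 0.
Proof.
move=> x0 i; have sum0 : \sum_i x i ^+ 2 = 0 by rewrite -sqr_norm2 x0 expr0n.
apply/eqP; rewrite -sqrf_eq0; apply/eqP.
exact: (psumr_eq0P (fun i _ => sqr_ge0 (x i)) sum0).
Qed.

Lemma norm2_scale (c : R) x : norm2 (fun i => c * x i) = `|c| * norm2 x.
Proof.
rewrite /norm2 -sqrtr_sqr -sqrtrM ?sqr_ge0 // mulr_sumr.
by under eq_bigr => i _ do rewrite exprMn.
Qed.

Lemma ler_sum_term (f : I -> R) i : (forall j, 0 <= f j) -> f i <= \sum_j f j.
Proof. by move=> f0; rewrite (bigD1 i) //= lerDl sumr_ge0. Qed.

(* Lagrange's identity: the defect of Cauchy-Schwarz is half a sum of squares. *)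
Lemma cauchy_schwarz_sqr x y :
  (\sum_i x i * y i) ^+ 2 <= (\sum_i x i ^+ 2) * (\sum_i y i ^+ 2).
Proof.
have lagrange : \sum_i \sum_j (x i * y j - x j * y i) ^+ 2 =
    2 * ((\sum_i x i ^+ 2) * (\sum_i y i ^+ 2) - (\sum_i x i * y i) ^+ 2).
  transitivity (\sum_i \sum_j (x i ^+ 2 * y j ^+ 2 + y i ^+ 2 * x j ^+ 2
                               - (2 * (x i * y i)) * (x j * y j))).
    by apply: eq_bigr => i _; apply: eq_bigr => j _; ring.
  under eq_bigr => i _ do rewrite sumrB big_split /=.
  rewrite sumrB big_split /= -!big_distrlr /= -mulr_sumr; ring.
rewrite -subr_ge0 -(pmulr_rge0 _ (ltr0Sn _ 1)) -lagrange.
by apply: sumr_ge0 => i _; exact: sumr_sqr_ge0.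
Qed.

Lemma cauchy_schwarz x y : `|\sum_i x i * y i| <= norm2 x * norm2 y.
Proof.
rewrite -sqrtr_sqr /norm2 -sqrtrM ?sumr_sqr_ge0 // ler_sqrt.
  exact: cauchy_schwarz_sqr.
by rewrite mulr_ge0 ?sumr_sqr_ge0.
Qed.

End FiniteSums.

Section SpectralNorm.
Context {R : realType} {k n : nat}.
Notation T := ('I_k * 'I_n)%type.
Variable M : T -> T -> R.

Lemma specnorm_has_sup :
  has_sup [set norm2 (fun t => \sum_t' M t t' * x t') |
           x in [set x : T -> R | norm2 x <= 1]].
Proof.
split; first by exists (norm2 (fun t => \sum_t' M t t' * 0)), (fun=> 0);
  rewrite //= norm2_0.
exists (Num.sqrt (\sum_t \sum_t' M t t' ^+ 2)) => _ [x /= x_le1 <-].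
rewrite /norm2 ler_sqrt; last by apply: sumr_ge0 => t _; exact: sumr_sqr_ge0.
apply: ler_sum => t _; apply: le_trans (cauchy_schwarz_sqr (M t) x) _.
rewrite ler_piMr ?sumr_sqr_ge0 // -sqr_norm2.
by rewrite exprn_ile1 ?norm2_ge0.
Qed.

Lemma specnorm_ge0 : 0 <= specnorm M.
Proof.
apply: le_trans (norm2_ge0 (fun t => \sum_t' M t t' * 0)) _.
by apply: (sup_upper_bound specnorm_has_sup); exists (fun=> 0); rewrite //= norm2_0.
Qed.

Lemma norm2_mul_le_specnorm (x : T -> R) :
  norm2 (fun t => \sum_t' M t t' * x t') <= specnorm M * norm2 x.
Proof.
have [x0|x_neq0] := eqVneq (norm2 x) 0.
  have -> : (fun t => \sum_t' M t t' * x t') = fun=> 0.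
    by apply/funext => t; rewrite big1 // => t' _; rewrite (norm2_eq0 _ x0) mulr0.
  by rewrite x0 mulr0 norm2_0.
have x_gt0 : 0 < norm2 x by rewrite lt_neqAle eq_sym x_neq0 norm2_ge0.
set y := fun t => (norm2 x)^-1 * x t.
have y_le1 : norm2 y <= 1.
  by rewrite /y norm2_scale ger0_norm ?invr_ge0 ?norm2_ge0 // mulVf.
have := sup_upper_bound specnorm_has_sup (ex_intro2 _ _ y y_le1 erefl).
have -> : (fun t => \sum_t' M t t' * y t') =
          (fun t => (norm2 x)^-1 * \sum_t' M t t' * x t').
  by apply/funext => t; rewrite /y mulr_sumr; apply: eq_bigr => t' _; ring.
rewrite norm2_scale ger0_norm ?invr_ge0 ?norm2_ge0 // => y_bound.
by rewrite -ler_pdivrMr // [_ / _]mulrC.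
Qed.

Lemma quad_form_le_specnorm (u v : T -> R) :
  `|\sum_t \sum_t' u t * M t t' * v t'| <= specnorm M * (norm2 u * norm2 v).
Proof.
have -> : \sum_t \sum_t' u t * M t t' * v t' =
          \sum_t u t * \sum_t' M t t' * v t'.
  by apply: eq_bigr => t _; rewrite mulr_sumr; apply: eq_bigr => t' _; ring.
apply: le_trans (cauchy_schwarz _ _) _.
by rewrite mulrCA ler_wpM2l ?norm2_ge0 ?norm2_mul_le_specnorm.
Qed.

End SpectralNorm.

Section Design.
Context {R : realType} {k n : nat}.
Notation W := {ffun 'I_n -> 'I_k}.
Variable P : W -> R.
Hypothesis P_design : is_design P.

Let P_ge0 w : 0 <= P w. Proof. by case: P_design. Qed.

Lemma Ex_scale (c : R) (X : W -> R) : Ex P (fun w => c * X w) = c * Ex P X.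
Proof. by rewrite /Ex mulr_sumr; apply: eq_bigr => w _; ring. Qed.

Lemma Ex_sum {I : finType} (X : I -> W -> R) :
  Ex P (fun w => \sum_i X i w) = \sum_i Ex P (X i).
Proof. by rewrite /Ex; under eq_bigr do rewrite mulr_sumr; rewrite exchange_big. Qed.

Lemma Ex_affine {I : finType} (c : R) (a : I -> R) (X : I -> W -> R) :
  Ex P (fun w => c + \sum_i a i * X i w) = c + \sum_i a i * Ex P (X i).
Proof.
have [_ P_sum1] := P_design.
rewrite {1}/Ex; under eq_bigr do rewrite mulrDr.
rewrite big_split /= -mulr_suml P_sum1 mul1r.
by under [in RHS]eq_bigr => i _ do rewrite -Ex_scale; rewrite -Ex_sum.
Qed.

Lemma Cov_affine {I J : finType} (c d : R) (a : I -> R) (b : J -> R)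
    (X : I -> W -> R) (Y : J -> W -> R) :
  Cov P (fun w => c + \sum_i a i * X i w) (fun w => d + \sum_j b j * Y j w)
  = \sum_i \sum_j a i * b j * Cov P (X i) (Y j).
Proof.
have centre (e : R) (K : finType) (g : K -> R) (Z : K -> W -> R) w :
    e + \sum_i g i * Z i w - Ex P (fun w => e + \sum_i g i * Z i w)
    = \sum_i g i * (Z i w - Ex P (Z i)).
  by rewrite Ex_affine opprD addrACA subrr add0r -sumrB; apply: eq_bigr => i _; ring.
rewrite {1}/Cov; under eq_fun do rewrite !centre big_distrlr.
rewrite Ex_sum; apply: eq_bigr => i _; rewrite Ex_sum; apply: eq_bigr => j _.
by rewrite -Ex_scale; congr Ex; apply/funext => w /=; ring.
Qed.

Lemma Prob_ge0 (A : pred W) : 0 <= Prob P A.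
Proof. exact: sumr_ge0. Qed.

Lemma Prob_subset (A B : pred W) :
  (forall w, A w -> B w) -> Prob P A <= Prob P B.
Proof.
move=> sub; rewrite /Prob !(big_mkcond _ P); apply: ler_sum => w _.
by case Aw: (A w); rewrite ?(sub w Aw) //; case: (B w).
Qed.

Lemma Prob_le_union (A B C : pred W) :
  (forall w, A w -> B w || C w) -> Prob P A <= Prob P B + Prob P C.
Proof.
move=> sub; rewrite /Prob !(big_mkcond _ P) -big_split /=.
apply: ler_sum => w _; have := P_ge0 w.
case Aw: (A w); last by case: (B w) (C w) => [] [] /=; lra.
by move: (sub w Aw); case: (B w) (C w) => [] [] //=; lra.
Qed.

Lemma markov (Y : W -> R) (A : pred W) (s : R) :
  (forall w, 0 <= Y w) -> (forall w, A w -> s <= Y w) ->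
  s * Prob P A <= Ex P Y.
Proof.
move=> Y_ge0 AY; rewrite /Prob /Ex mulr_sumr.
apply: le_trans (_ : \sum_(w | A w) P w * Y w <= _).
  by apply: ler_sum => w Aw; rewrite mulrC ler_wpM2l ?AY.
by rewrite [leRHS](bigID A) /= lerDl sumr_ge0 // => w _; rewrite mulr_ge0.
Qed.

Lemma markov_ge (Y : W -> R) (s : R) :
  (forall w, 0 <= Y w) -> 0 < s -> Prob P (fun w => s <= Y w) <= Ex P Y / s.
Proof. by move=> Y_ge0 s_gt0; rewrite ler_pdivlMr // mulrC; exact: markov. Qed.

Lemma Prob_gt0_eq0 (Y : W -> R) :
  (forall w, 0 <= Y w) -> Ex P Y <= 0 -> Prob P (fun w => 0 < Y w) = 0.
Proof.
move=> Y_ge0 EY_le0.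
have PY_ge0 w : 0 <= P w * Y w by rewrite mulr_ge0.
have EY0 : \sum_w P w * Y w = 0 by apply/eqP; rewrite eq_le EY_le0 sumr_ge0.
rewrite /Prob big1 // => w Yw_gt0.
have /eqP := psumr_eq0P (fun w _ => PY_ge0 w) EY0 (isT : xpredT w).
by rewrite mulf_eq0 (gt_eqF Yw_gt0) orbF => /eqP.
Qed.

(* A form of Markov's inequality that remains valid at the threshold [t = 0]. *)
Lemma markov_gt_sqr (Y : W -> R) (t c : R) :
  (forall w, 0 <= Y w) -> 0 <= t -> Ex P Y <= c * t ^+ 2 ->
  Prob P (fun w => t < Y w) <= c * t.
Proof.
move=> Y_ge0; rewrite le_eqVlt => /predU1P [<-|t_gt0] EY_le.
  by rewrite expr0n mulr0 in EY_le; rewrite Prob_gt0_eq0 ?mulr0.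
rewrite -(ler_pM2l t_gt0) mulrCA -expr2; apply: le_trans EY_le.
by apply: markov => // w /ltW.
Qed.

End Design.

Section Estimators.
Context {R : realType} {k l1 l2 n : nat}.
Notation W := {ffun 'I_n -> 'I_k}.
Notation T := ('I_k * 'I_n)%type.
Variable P : W -> R.
Hypothesis P_design : is_design P.
Hypothesis pidiag_neq0 : forall t, pidiag P t != 0.

Lemma Ex_ipw t : Ex P (fun w => Rind R w t / pidiag P t) = 1.
Proof.
rewrite /Ex; under eq_bigr do rewrite mulrA.
by rewrite -mulr_suml; exact: (mulfV (pidiag_neq0 t)).
Qed.

Lemma Cov_ipw (c d : R) (u v : T -> R) :
  Cov P (fun w => c + \sum_t n%:R^-1 * u t * (Rind R w t / pidiag P t))
        (fun w => d + \sum_t n%:R^-1 * v t * (Rind R w t / pidiag P t))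
  = (n%:R ^+ 2)^-1 * \sum_t \sum_t' u t * Dmat P t t' * v t'.
Proof.
rewrite Cov_affine // mulr_sumr; apply: eq_bigr => t _.
by rewrite mulr_sumr; apply: eq_bigr => t' _; rewrite -exprVn /Dmat; ring.
Qed.

Lemma Cov_ipw_le (c d : R) (u v : T -> R) :
  `|Cov P (fun w => c + \sum_t n%:R^-1 * u t * (Rind R w t / pidiag P t))
          (fun w => d + \sum_t n%:R^-1 * v t * (Rind R w t / pidiag P t))|
  <= specnorm (Dmat P) / n%:R * (n%:R^-1 * (norm2 u * norm2 v)).
Proof.
rewrite Cov_ipw normrM ger0_norm ?invr_ge0 ?exprn_ge0 //.
have -> : specnorm (Dmat P) / n%:R * (n%:R^-1 * (norm2 u * norm2 v)) =
          (n%:R ^+ 2)^-1 * (specnorm (Dmat P) * (norm2 u * norm2 v)).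
  by rewrite -exprVn; ring.
by rewrite ler_wpM2l ?invr_ge0 ?exprn_ge0 ?quad_form_le_specnorm.
Qed.

Lemma mhat_affine (ph : T -> R) :
  mhat P ph = fun w => 0 + \sum_t n%:R^-1 * ph t * (Rind R w t / pidiag P t).
Proof.
by apply/funext => w; rewrite add0r /mhat mulr_sumr; apply: eq_bigr => t _; ring.
Qed.

Lemma Ex_mhat (ph : T -> R) : Ex P (mhat P ph) = mpop ph.
Proof.
rewrite mhat_affine Ex_affine // add0r /mpop mulr_sumr.
by apply: eq_bigr => t _; rewrite Ex_ipw mulr1.
Qed.

Lemma Var_mhat_le (ph : T -> R) (C' : R) :
  n%:R^-1 * norm2 ph ^+ 2 <= C' ->
  Cov P (mhat P ph) (mhat P ph) <= C' * (specnorm (Dmat P) / n%:R).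
Proof.
move=> ph_bound; rewrite mhat_affine; apply: le_trans (ler_norm _) _.
apply: le_trans (Cov_ipw_le _ _ _ _) _; rewrite -expr2 mulrC.
by rewrite ler_wpM2r // mulr_ge0 ?invr_ge0 ?specnorm_ge0.
Qed.

Variable phi : 'I_(l1 + l2) -> T -> R.

Lemma dist2r_ge0 (mt : 'I_l1 -> R) : 0 <= dist2r phi mt.
Proof. by apply: sumr_ge0 => j _; exact: sqr_ge0. Qed.

Lemma Ex_dist2r_le (C' : R) :
  (forall s, n%:R^-1 * norm2 (phi s) ^+ 2 <= C') ->
  Ex P (fun w => dist2r phi (mhat_r phi P w))
    <= l1%:R * C' * (specnorm (Dmat P) / n%:R).
Proof.
have -> : l1%:R * C' * (specnorm (Dmat P) / n%:R) =
          \sum_(j < l1) C' * (specnorm (Dmat P) / n%:R).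
  by rewrite sumr_const card_ord -mulrA mulr_natl.
move=> phi_bound; rewrite Ex_sum.
apply: ler_sum => j _; rewrite /mhat_r /mvec_r -Ex_mhat.
by under eq_fun do rewrite expr2; exact: Var_mhat_le.
Qed.

Variable F : ('I_(l1 + l2) -> R) -> 'I_k -> R.
Variable dF : 'I_k -> 'I_l1 -> R.

Lemma muL_affine a :
  (fun w => muL phi F dF P w a) =
  fun w => (F (mvec phi) a - \sum_j dF a j * mvec_r phi j) +
    \sum_t n%:R^-1 * zmat phi dF t a * (Rind R w t / pidiag P t).
Proof.
apply/funext => w; rewrite /muL /mhat_r /mhat /zmat -addrA; congr (_ + _).
under eq_bigr => j _ do rewrite mulrBr mulr_sumr mulr_sumr.
rewrite sumrB exchange_big /= addrC; congr (_ - _); apply: eq_bigr => t _.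
by rewrite !mulr_sumr mulr_suml; apply: eq_bigr => j _; ring.
Qed.

Lemma Cov_muL a b :
  Cov P (fun w => muL phi F dF P w a) (fun w => muL phi F dF P w b)
  = (n%:R ^+ 2)^-1 * \sum_t \sum_t' zmat phi dF t a * Dmat P t t' * zmat phi dF t' b.
Proof. by rewrite !muL_affine Cov_ipw. Qed.

Lemma Cov_muL_le a b (B : R) :
  n%:R^-1 * \sum_t \sum_c zmat phi dF t c ^+ 2 <= B ->
  `|Cov P (fun w => muL phi F dF P w a) (fun w => muL phi F dF P w b)|
    <= B * (specnorm (Dmat P) / n%:R).
Proof.
set S := \sum_t _ => z_bound; rewrite !muL_affine.
apply: le_trans (Cov_ipw_le _ _ _ _) _; rewrite mulrC ler_wpM2r //.
  by rewrite mulr_ge0 ?invr_ge0 ?specnorm_ge0.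
apply: le_trans z_bound; rewrite ler_wpM2l ?invr_ge0 //.
have S_ge0 : 0 <= S by apply: sumr_ge0 => t _; exact: sumr_sqr_ge0.
have column_le c : norm2 (fun t => zmat phi dF t c) <= Num.sqrt S.
  rewrite /norm2 ler_sqrt //; apply: ler_sum => t _.
  by apply: (ler_sum_term (fun c => zmat phi dF t c ^+ 2)) => c'; exact: sqr_ge0.
by rewrite -(sqr_sqrtr S_ge0) expr2 ler_pM ?norm2_ge0.
Qed.

Section Remainder.
Variables (C e0 : R).
Hypothesis F_approx : forall mt : 'I_l1 -> R, dist2r phi mt < e0 ->
  norm2 (fun a => F (mix phi mt) a - F (mvec phi) a
                  - \sum_j dF a j * (mt j - mvec_r phi j))
    <= C * dist2r phi mt.

Lemma remainder_norm_le w : dist2r phi (mhat_r phi P w) < e0 ->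
  norm2 (fun a => muhat phi F P w a - muL phi F dF P w a)
    <= C * dist2r phi (mhat_r phi P w).
Proof.
move=> /F_approx; congr (norm2 _ <= _); apply/funext => a.
by rewrite /muhat /muL opprD addrA.
Qed.

Lemma Prob_remainder_gt_le (t : R) : 0 < e0 ->
  Prob P (fun w => t < norm2 (fun a => muhat phi F P w a - muL phi F dF P w a))
  <= Ex P (fun w => dist2r phi (mhat_r phi P w)) / e0
     + Prob P (fun w => t < C * dist2r phi (mhat_r phi P w)).
Proof.
move=> e0_gt0; apply: le_trans (@Prob_le_union _ _ _ P P_design _
  (fun w => e0 <= dist2r phi (mhat_r phi P w))
  (fun w => t < C * dist2r phi (mhat_r phi P w)) _) _.
  move=> w /= t_lt; case: (leP e0) => //= dist_lt.
  exact: lt_le_trans t_lt (remainder_norm_le _ dist_lt).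
by rewrite lerD2r markov_ge // => w; exact: dist2r_ge0.
Qed.

End Remainder.
End Estimators.

Section Asymptotics.
Context {R : realType} {k : nat}.
Variable P : forall n, {ffun 'I_n -> 'I_k} -> R.
Hypothesis P_design : forall n, is_design (P n).

Lemma cvg_sqrtr0 (u : nat -> R) :
  u @ \oo --> 0 -> (fun n => Num.sqrt (u n)) @ \oo --> 0.
Proof.
by move=> u_to0; rewrite -sqrtr0; exact: continuous_cvg (@sqrt_continuous R 0) u_to0.
Qed.

Lemma o_p1_of_vanishing_rate
    (X : forall n, {ffun 'I_n -> 'I_k} -> 'I_k -> R) (a : nat -> R) :
  o_p P X a -> a @ \oo --> 0 -> o_p P X (fun=> 1).
Proof.
move=> Xa a_to0 e e_gt0.
have a_le1 : \forall n \near \oo, a n <= 1.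
  by apply: filterS (cvgr_lt _ a_to0 _ ltr01) => n /ltW.
apply: (squeeze_cvgr _ (cvg_cst 0) (Xa e e_gt0)).
apply: filterS a_le1 => n an_le1; rewrite Prob_ge0 //=.
by apply: Prob_subset => // w; apply: le_lt_trans; rewrite ler_pM2l.
Qed.

Context {l1 l2 : nat}.
Variable phi : forall n, 'I_(l1 + l2) -> ('I_k * 'I_n)%type -> R.
Variable F : forall n : nat, ('I_(l1 + l2) -> R) -> 'I_k -> R.
Variable dF : forall n : nat, 'I_k -> 'I_l1 -> R.
Hypothesis pidiag_neq0 : forall n t, pidiag (P n) t != 0.

Lemma remainder_o_p_sqrt (N : nat) (C e0 C' : R) :
  0 < C -> 0 < e0 -> 0 <= C' ->
  (forall n, (N <= n)%N -> forall mt : 'I_l1 -> R, dist2r (phi n) mt < e0 ->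
     norm2 (fun a => F n (mix (phi n) mt) a - F n (mvec (phi n)) a
                     - \sum_j dF n a j * (mt j - mvec_r (phi n) j))
       <= C * dist2r (phi n) mt) ->
  (forall n s, n%:R^-1 * norm2 (phi n s) ^+ 2 <= C') ->
  (fun n => specnorm (Dmat (P n)) / n%:R) @ \oo --> 0 ->
  o_p P (fun n w a => muhat (phi n) (F n) (P n) w a - muL (phi n) (F n) (dF n) (P n) w a)
    (fun n => Num.sqrt (specnorm (Dmat (P n)) / n%:R)).
Proof.
move=> C_gt0 e0_gt0 C'_ge0 F_approx phi_bound d_to0 e e_gt0.
set d := fun n => specnorm (Dmat (P n)) / n%:R.
set K := l1%:R * C'; set c := C * K / e ^+ 2.
have d_ge0 n : 0 <= d n by rewrite mulr_ge0 ?invr_ge0 ?specnorm_ge0.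
have bound_to0 : (fun n => K * d n / e0 + c * (e * Num.sqrt (d n))) @ \oo
                  --> K * 0 / e0 + c * (e * 0).
  apply: cvgD; [apply: cvgMr_tmp | apply: cvgMl_tmp]; apply: cvgMl_tmp => //.
  exact: cvg_sqrtr0.
rewrite !mulr0 mul0r addr0 in bound_to0.
apply: (squeeze_cvgr _ (cvg_cst 0) bound_to0).
exists N => // n /= n_ge; rewrite Prob_ge0 //=.
have Ex_dist_le := Ex_dist2r_le _ (P_design n) (pidiag_neq0 n) _ _ (phi_bound n).
apply: le_trans
  (Prob_remainder_gt_le _ (P_design n) _ _ _ _ _ (F_approx n n_ge) _ e0_gt0) _.
apply: lerD; first by rewrite ler_pM2r ?invr_gt0.
apply: markov_gt_sqr => //.
- by move=> w; apply: mulr_ge0; [exact: ltW | exact: dist2r_ge0].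
- by apply: mulr_ge0; [exact: ltW | exact: sqrtr_ge0].
have -> : c * (e * Num.sqrt (d n)) ^+ 2 = C * (K * d n).
  by rewrite exprMn sqr_sqrtr // /c; field; rewrite gt_eqF.
by rewrite Ex_scale ler_pM2l.
Qed.

Lemma Cov_muL_bigO :
  bigO1 (fun n => n%:R^-1 * \sum_t \sum_c zmat (phi n) (dF n) t c ^+ 2) ->
  exists2 C : R, 0 <= C & exists N : nat, forall n, (N <= n)%N -> forall a b : 'I_k,
    `|Cov (P n) (fun w => muL (phi n) (F n) (dF n) (P n) w a)
                (fun w => muL (phi n) (F n) (dF n) (P n) w b)|
      <= C * (specnorm (Dmat (P n)) / n%:R).
Proof.
move=> [B [N z_bound]]; exists B; first exact: le_trans (z_bound N (leqnn N)).
exists N => n n_ge a b; apply: (Cov_muL_le _ (P_design n)).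
exact: le_trans (ler_norm _) (z_bound n n_ge).
Qed.

End Asymptotics.

Theorem mainTheorem2 (R : realType) (k l1 l2 : nat)
  (P : forall n, {ffun 'I_n -> 'I_k} -> R)
  (phi : forall n, 'I_(l1 + l2) -> ('I_k * 'I_n)%type -> R)
  (F : forall n, ('I_(l1 + l2) -> R) -> 'I_k -> R)
  (dF : forall n, 'I_k -> 'I_l1 -> R) :
  (0 < l1)%N ->
  (forall n, is_design (P n)) ->
  (forall n t, 0 < pidiag (P n) t < 1) ->
  (exists N : nat, exists C : R, exists eps : R, 0 < C /\ 0 < eps /\
     forall n, (N <= n)%N -> forall mt : 'I_l1 -> R,
       dist2r (phi n) mt < eps ->
       norm2 (fun a => F n (mix (phi n) mt) a - F n (mvec (phi n)) a)
         <= C * Num.sqrt (dist2r (phi n) mt)) ->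
  (exists C' : R, forall n s, n%:R^-1 * norm2 (phi n s) ^+ 2 <= C') ->
  (exists N : nat, exists C : R, exists eps : R, 0 < C /\ 0 < eps /\
     forall n, (N <= n)%N -> forall mt : 'I_l1 -> R,
       dist2r (phi n) mt < eps ->
       norm2 (fun a => F n (mix (phi n) mt) a - F n (mvec (phi n)) a
                       - \sum_j dF n a j * (mt j - mvec_r (phi n) j))
         <= C * dist2r (phi n) mt) ->
  (fun n : nat => specnorm (Dmat (P n)) / n%:R) @ \oo --> (0 : R) ->
  [/\ o_p P (fun n w a => muhat (phi n) (F n) (P n) w a - muL (phi n) (F n) (dF n) (P n) w a)
         (fun n => Num.sqrt (specnorm (Dmat (P n)) / n%:R)),
      o_p P (fun n w a => muhat (phi n) (F n) (P n) w a - muL (phi n) (F n) (dF n) (P n) w a)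
         (fun _ => 1),
      (forall n, (0 < n)%N -> forall a b : 'I_k,
         Cov (P n) (fun w => muL (phi n) (F n) (dF n) (P n) w a)
                   (fun w => muL (phi n) (F n) (dF n) (P n) w b)
         = (n%:R ^+ 2)^-1 * \sum_t \sum_t'
              zmat (phi n) (dF n) t a * Dmat (P n) t t' * zmat (phi n) (dF n) t' b)
    & bigO1 (fun n => n%:R^-1 * \sum_t \sum_c zmat (phi n) (dF n) t c ^+ 2) ->
      (exists C : R, exists N : nat, forall n, (N <= n)%N -> forall a b : 'I_k,
         `|Cov (P n) (fun w => muL (phi n) (F n) (dF n) (P n) w a)
                     (fun w => muL (phi n) (F n) (dF n) (P n) w b)|
           <= C * (specnorm (Dmat (P n)) / n%:R))
      /\ (bigO1 (fun n => specnorm (Dmat (P n))) ->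
          exists C : R, exists N : nat, forall n, (N <= n)%N -> forall a b : 'I_k,
         `|Cov (P n) (fun w => muL (phi n) (F n) (dF n) (P n) w a)
                     (fun w => muL (phi n) (F n) (dF n) (P n) w b)|
           <= C / n%:R)].
Proof.
move=> l1_gt0 P_design pi_bounds _ [C' phi_bound]
       [N [C [e0 [C_gt0 [e0_gt0 F_approx]]]]] d_to0.
have pidiag_neq0 n t : pidiag (P n) t != 0.
  by case/andP: (pi_bounds n t) => /lt0r_neq0.
have C'_ge0 : 0 <= C'.
  apply: le_trans (phi_bound 0%N (lshift l2 (Ordinal l1_gt0))).
  by apply: mulr_ge0; [rewrite invr_ge0 | exact: sqr_ge0].
have rem_o_p_sqrt := remainder_o_p_sqrt _ P_design _ _ dF pidiag_neq0 _ _ _ _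
  C_gt0 e0_gt0 C'_ge0 F_approx phi_bound d_to0.
split=> [||n _ a b|z_bigO].
- exact: rem_o_p_sqrt.
- exact: o_p1_of_vanishing_rate P_design _ _ rem_o_p_sqrt (cvg_sqrtr0 _ d_to0).
- exact: Cov_muL.
have [Cz Cz_ge0 [Nz Cov_le]] := Cov_muL_bigO _ P_design _ F _ z_bigO.
split; first by exists Cz, Nz.
move=> [Bs [Ns D_bound]]; exists (Cz * Bs), (maxn Nz Ns) => n.
rewrite geq_max => /andP[n_ge_Nz n_ge_Ns] a b.
apply: le_trans (Cov_le n n_ge_Nz a b) _; rewrite -mulrA ler_wpM2l //.
by rewrite ler_wpM2r ?invr_ge0 // (le_trans (ler_norm _) (D_bound n n_ge_Ns)).
Qed.
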